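(* Let $U\in U(2)$ and $U_{\mathfrak s}=\frac12(U+U^T)$. Then the trace norm of $U_{\mathfrak s}$ (the sum of its singular values) equals $\sqrt{\operatorname{tr}[U\overline U]+2}$.
   Context: $\overline U$ is the entrywise complex conjugate of $U$. *)

From HB Require Import structures.
From mathcomp Require Import all_boot all_order all_algebra.
Set Implicit Arguments. Unset Strict Implicit. Unset Printing Implicit Defensive.
Import Order.TTheory GRing.Theory Num.Theory.
Local Open Scope ring_scope.

(* Complex numbers: an arbitrary numeric algebraically closed field C
   (e.g. complex R for a real closed / real field R, or algC). *)

Definition entry_conj {C : numClosedFieldType} {m n : nat} (A : 'M[C]_(m, n)) : 'M[C]_(m, n) :=
  map_mx Num.conj A.

Definition adjmx {C : numClosedFieldType} {m n : nat} (A : 'M[C]_(m, n)) : 'M[C]_(n, m) :=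
  (entry_conj A)^T.

Definition unitary {C : numClosedFieldType} {n : nat} (U : 'M[C]_n) : Prop :=
  U *m adjmx U = 1%:M.

(* The eigenvalues of A^* A, listed with multiplicity (roots of its
   characteristic polynomial, which splits since C is algebraically closed). *)
Definition sq_singular_values {C : numClosedFieldType} {n : nat} (A : 'M[C]_n) : seq C :=
  sval (closed_field_poly_normal (char_poly (adjmx A *m A))).

Definition singular_values {C : numClosedFieldType} {n : nat} (A : 'M[C]_n) : seq C :=
  [seq sqrtC x | x <- sq_singular_values A].

Definition trace_norm {C : numClosedFieldType} {n : nat} (A : 'M[C]_n) : C :=
  \sum_(s <- singular_values A) s.

From HB Require Import structures.
From mathcomp Require Import all_boot all_order all_algebra ring.
Import Order.TTheory GRing.Theory Num.Theory.
Set Implicit Arguments. Unset Strict Implicit. Unset Printing Implicit Defensive.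
Local Open Scope ring_scope.

(* Let S = (U + U^T)/2, d = det U, and write A^* for the conjugate transpose.
   Unitarity gives adj U = d U^*; for 2x2 matrices adj A = (tr A) I - A is
   additive and commutes with transposition, so also adj S = d S^*. Hence
   S S^* = (det S / d) I: the matrix S^* S has the double eigenvalue |det S|,
   which is tr (S^* S) / 2, so the trace norm of S is
   2 sqrt |det S| = sqrt (2 tr (S^* S)). Expanding the product,
   2 tr (S^* S) = tr (U^* U) + tr (U conj U), and tr (U^* U) = 2. *)

Lemma big_ord2 (R : nmodType) (F : 'I_2 -> R) : \sum_(i < 2) F i = F 0 + F 1.
Proof. by rewrite !big_ord_recl big_ord0 addr0; congr (_ + F _); apply: val_inj. Qed.

Lemma mxtrace2 (R : pzSemiRingType) (A : 'M[R]_2) : \tr A = A 0 0 + A 1 1.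
Proof. exact: big_ord2. Qed.

Lemma ord2_cases (i : 'I_2) : i = 0 \/ i = 1.
Proof. by case: i => [[|[|//]]] ?; [left | right]; apply: val_inj. Qed.

Lemma adj_mx2 (R : comPzRingType) (A : 'M[R]_2) : \adj A = (\tr A)%:M - A.
Proof.
have lift0 : lift 0 0 = 1 :> 'I_2 by apply: val_inj.
have lift1 : lift 1 0 = 0 :> 'I_2 by apply: val_inj.
apply/matrixP => i j; rewrite mxtrace2 !mxE /cofactor det_mx11 !mxE.
by case: (ord2_cases i) => ->; case: (ord2_cases j) => ->;
  rewrite ?lift0 ?lift1 /=; ring.
Qed.

Lemma adj_add_trmx2 (R : comPzRingType) (A : 'M[R]_2) :
  \adj (A + A^T) = \adj A + (\adj A)^T.
Proof.
rewrite !adj_mx2 mxtraceD mxtrace_tr linearB /= tr_scalar_mx raddfD /=.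
by rewrite opprD addrACA.
Qed.

Lemma double_root_eq (R : idomainType) (x y z : R) :
  y + z = x *+ 2 -> y * z = x ^+ 2 -> y = x /\ z = x.
Proof.
move=> sum_yz prod_yz.
have z_def : z = x *+ 2 - y by rewrite -sum_yz addrC addKr.
have : (y - x) ^+ 2 = 0 by rewrite -(subrr (x ^+ 2)) -{2}prod_yz z_def; ring.
move/eqP; rewrite expf_eq0 /= subr_eq0 => /eqP y_x.
by split=> //; rewrite z_def y_x mulr2n addrK.
Qed.

Lemma char_poly2_roots (R : idomainType) (M : 'M[R]_2) (s : seq R) :
  char_poly M = \prod_(x <- s) ('X - x%:P) ->
  exists l1 l2, [/\ s = [:: l1; l2], l1 + l2 = \tr M & l1 * l2 = \det M].
Proof.
move=> chiM; have := size_char_poly M; rewrite chiM size_prod_XsubC => -[].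
case: s chiM => [|l1 [|l2 []]] //= chiM _; exists l1, l2; split=> //.
- have := char_poly_trace (n := 2) M isT.
  rewrite chiM (coefPn_prod_XsubC (ps := [:: l1; l2])) //= !big_cons big_nil.
  by rewrite addr0 => /oppr_inj.
- have := char_poly_det M.
  by rewrite chiM coef0_prod_XsubC /= !big_cons big_nil sqrrN expr1n !mul1r mulr1.
Qed.

Section Adjoint.
Variable C : numClosedFieldType.

Lemma det_adjmx (n : nat) (A : 'M[C]_n) : \det (adjmx A) = (\det A)^*.
Proof. by rewrite /adjmx det_tr det_map_mx. Qed.

Lemma adjmx_tr (m n : nat) (A : 'M[C]_(m, n)) : adjmx A^T = entry_conj A.
Proof. by rewrite /adjmx /entry_conj map_trmx trmxK. Qed.

Lemma adjmxD (m n : nat) (A B : 'M[C]_(m, n)) : adjmx (A + B) = adjmx A + adjmx B.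
Proof. by rewrite /adjmx /entry_conj map_mxD linearD. Qed.

Lemma adjmxZ (m n : nat) (a : C) (A : 'M[C]_(m, n)) : adjmx (a *: A) = a^* *: adjmx A.
Proof. by rewrite /adjmx /entry_conj map_mxZ linearZ. Qed.

Lemma mxtrace_adjmx_mul_ge0 (m n : nat) (A : 'M[C]_(m, n)) : 0 <= \tr (adjmx A *m A).
Proof.
rewrite /mxtrace sumr_ge0 // => i _; rewrite mxE sumr_ge0 // => j _.
by rewrite /adjmx /entry_conj !mxE mulrC mul_conjC_ge0.
Qed.

Lemma adj_unitary (n : nat) (U : 'M[C]_n) : unitary U -> \adj U = \det U *: adjmx U.
Proof. by move=> hU; rewrite -[\adj U]mulmx1 -hU mulmxA mul_adj_mx mul_scalar_mx. Qed.

Lemma normC_det_unitary (n : nat) (U : 'M[C]_n) : unitary U -> `|\det U| = 1.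
Proof.
move=> hU; have := congr1 determinant hU.
by rewrite det_mulmx det_adjmx det1 normC_def => ->; rewrite sqrtC1.
Qed.

End Adjoint.

Section TwoByTwo.
Variable C : numClosedFieldType.
Implicit Types A : 'M[C]_2.

Lemma mxtrace_adjmx_mul2 A (d : C) :
  `|d| = 1 -> \adj A = d *: adjmx A -> \tr (adjmx A *m A) = 2 * `|\det A|.
Proof.
move=> d1 adjA; have := congr1 mxtrace (mul_mx_adj A).
rewrite adjA -scalemxAr mxtraceZ mxtrace_scalar mxtrace_mulC => trA.
rewrite -[LHS]ger0_norm ?mxtrace_adjmx_mul_ge0 // -[LHS]mul1r -{1}d1 -normrM trA.
by rewrite normrMn mulr_natl.
Qed.

Lemma sq_singular_values2 A : exists l1 l2,
  [/\ sq_singular_values A = [:: l1; l2],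
      l1 + l2 = \tr (adjmx A *m A) & l1 * l2 = \det (adjmx A *m A)].
Proof.
rewrite /sq_singular_values; case: closed_field_poly_normal => s chiM /=.
by apply: char_poly2_roots; rewrite chiM (monicP (char_poly_monic _)) scale1r.
Qed.

Lemma trace_norm_mx2 A : \tr (adjmx A *m A) = 2 * `|\det A| ->
  trace_norm A = sqrtC (2 * \tr (adjmx A *m A)).
Proof.
move=> trA; have [l1 [l2 [sv sum_l prod_l]]] := sq_singular_values2 A.
rewrite det_mulmx det_adjmx -normCKC in prod_l.
rewrite /trace_norm /singular_values sv.
have [-> ->] := double_root_eq (etrans sum_l (etrans trA (mulr_natl _ 2))) prod_l.
rewrite !big_cons big_nil addr0 trA mulrA.
have -> : (2 * 2 : C) = 2 ^+ 2 by rewrite expr2.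
by rewrite sqrtCM ?nnegrE ?exprn_ge0 // sqrCK // mulr2n mulrDl mul1r.
Qed.

End TwoByTwo.

Lemma mxtrace_adjmx_mul_add_trmx (C : numClosedFieldType) (n : nat) (A : 'M[C]_n) :
  \tr (adjmx (A + A^T) *m (A + A^T)) =
  (\tr (A *m adjmx A) + \tr (A *m entry_conj A)) *+ 2.
Proof.
have tr_adj_tr : \tr (adjmx A *m A^T) = \tr (A *m entry_conj A).
  by rewrite /adjmx -trmx_mul mxtrace_tr.
have tr_conj_tr : \tr (entry_conj A *m A^T) = \tr (A *m adjmx A).
  by rewrite /adjmx -[RHS]mxtrace_tr trmx_mul trmxK.
rewrite adjmxD adjmx_tr mulmxDl !mulmxDr !mxtraceD tr_adj_tr tr_conj_tr.
by rewrite mxtrace_mulC [\tr (entry_conj A *m A)]mxtrace_mulC mulr2n; ring.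
Qed.

Theorem lemma3 (C : numClosedFieldType) (U : 'M[C]_2) :
  unitary U ->
  trace_norm ((2%:R)^-1 *: (U + U^T)) = sqrtC (\tr (U *m entry_conj U) + 2%:R).
Proof.
move=> hU; set S := 2^-1 *: (U + U^T).
have conj_half : (2^-1 : C)^* = 2^-1 by rewrite geC0_conj // invr_ge0 ler0n.
have adjS : \adj S = \det U *: adjmx S.
  rewrite adjZ expr1 adj_add_trmx2 adj_unitary // linearZ /= adjmxZ adjmxD adjmx_tr.
  by rewrite conj_half /adjmx trmxK -scalerDr !scalerA mulrC.
have trS := mxtrace_adjmx_mul2 (normC_det_unitary hU) adjS.
rewrite (trace_norm_mx2 trS); congr sqrtC.
rewrite /S adjmxZ -scalemxAl -scalemxAr !mxtraceZ mxtrace_adjmx_mul_add_trmx hU mxtrace1.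
by rewrite conj_half; field.
Qed.
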